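(* Let $r,s,i$ be positive integers. Then there is a constant $\alpha^0(r,s,i)$ such that for every connected $(K_{1,r},K_s^h)$-free graph $G$ and every vertex $c\in V(G)$, $\alpha_i^0(G,c)<\alpha^0(r,s,i)$.
   Context: All graphs are finite, simple, undirected. $N_G^i(c)$ denotes the set of vertices of $G$ at distance exactly $i$ from $c$. $\alpha_i^0(G,c)$ is the maximum size of an independent set $M^0\subseteq N_G^i(c)$ of $G$. $K_{1,r}$ is the star with $r$ leaves; $K_s^h$ is the graph obtained from the complete graph $K_s$ by attaching a pendant edge to each of its vertices. $(K_{1,r},K_s^h)$-free means no induced subgraph isomorphic to $K_{1,r}$ or $K_s^h$. *)

From mathcomp Require Import all_boot.
Set Implicit Arguments. Unset Strict Implicit. Unset Printing Implicit Defensive.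

Section Graphs.
Variables (T : finType) (e : rel T).

Definition simple_graph : Prop := symmetric e /\ irreflexive e.

Definition connected_graph : Prop := forall x y : T, connect e x y.

Definition walk_len (x y : T) (n : nat) : bool :=
  [exists p : n.-tuple T, path e x p && (last x p == y)].

Definition dist_eq (x y : T) (n : nat) : bool :=
  walk_len x y n && [forall m : 'I_n, ~~ walk_len x y m].

Definition Nbhd (c : T) (i : nat) : {set T} :=
  [set v | dist_eq c v i].

Definition independent (M : {set T}) : bool :=
  [forall x in M, forall y in M, ~~ e x y].

Definition alpha0 (c : T) (i : nat) : nat :=
  \max_(M : {set T} | (M \subset Nbhd c i) && independent M) #|M|.

Definition has_induced_star (r : nat) : Prop :=
  exists (v : T) (f : 'I_r -> T),
    injective f /\ (forall j, f j != v) /\ (forall j, e v (f j)) /\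
    (forall j k, j != k -> ~~ e (f j) (f k)).

(* G contains an induced K_s^h : a clique a_0..a_{s-1}, each a_j with a
   pendant neighbour b_j, all 2s vertices distinct, and no other edges *)
Definition has_induced_Ksh (s : nat) : Prop :=
  exists (a b : 'I_s -> T),
    injective a /\ injective b /\ (forall j k, a j != b k) /\
    (forall j k, j != k -> e (a j) (a k)) /\
    (forall j, e (a j) (b j)) /\
    (forall j k, j != k -> ~~ e (a j) (b k)) /\
    (forall j k, j != k -> ~~ e (b j) (b k)).

Definition star_Ksh_free (r s : nat) : Prop :=
  ~ has_induced_star r /\ ~ has_induced_Ksh s.

End Graphs.

From mathcomp Require Import all_boot zify.
Set Implicit Arguments. Unset Strict Implicit. Unset Printing Implicit Defensive.

(* Let M be a large independent set at distance i+1 from c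
   and give each m in M a parent p m at distance i.  If the parent of some x
   in an r-subset B of M is adjacent to all of B, then p x is the centre of an
   induced K_{1,r}; a Ramsey argument on an orientation of the relation
   "p x ~ y" then yields a large S in M such that p x is adjacent to no other
   element of S, so p is injective on S.  Ramsey on the parents of S gives
   either s pairwise adjacent parents, which with their children form an
   induced K_s^h, or a large independent set of parents at distance i,
   contradicting the induction hypothesis. *)

Definition clique (T : finType) (R : rel T) (B : {set T}) :=
  {in B &, forall x y, x != y -> R x y}.

Section Ramsey.
Variable T : finType.

Lemma clique0 (R : rel T) : clique R set0.
Proof. by move=> x y; rewrite in_set0. Qed.

Definition link (R : rel T) (A : {set T}) (x : T) := [set y in A :\ x | R x y].

Lemma link_sub (R : rel T) (A : {set T}) x : link R A x \subset A.
Proof. by apply/subsetP => y; rewrite !inE => /andP [/andP [_ ->]]. Qed.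

Lemma clique_link (R : rel T) (A B : {set T}) x :
  symmetric R -> x \in A -> B \subset link R A x -> clique R B ->
  [/\ x |: B \subset A, #|x |: B| = #|B|.+1 & clique R (x |: B)].
Proof.
move=> R_sym xA BA clB; have RxB y : y \in B -> R x y.
  by move=> /(subsetP BA); rewrite inE => /andP [].
split.
- by rewrite subUset sub1set xA (subset_trans BA (link_sub _ _ _)).
- by rewrite cardsU1; case: (boolP (x \in B)) => // /(subsetP BA); rewrite !inE eqxx.
- move=> y z; rewrite !inE => /predU1P [-> | yB] /predU1P [-> | zB]; rewrite ?eqxx //.
  + by move=> _; apply: RxB.
  + by move=> _; rewrite R_sym; apply: RxB.
  + exact: clB.
Qed.

Variables (E : rel T) (E_sym : symmetric E).

Let NE := [rel x y | ~~ E x y].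

Lemma card_links (A : {set T}) x : x \in A -> #|link E A x| + #|link NE A x| = #|A|.-1.
Proof.
move=> xA; rewrite (cardsD1 x A) xA -(cardsID [set y | E x y] (A :\ x)).
by congr (_ + _); apply: eq_card => y; rewrite !inE andbC.
Qed.

Lemma ramsey a b (A : {set T}) : 2 ^ (a + b) <= #|A| ->
  exists2 B : {set T}, B \subset A &
    (#|B| = a /\ clique E B) \/ (#|B| = b /\ clique NE B).
Proof.
have NE_sym : symmetric NE by move=> x y /=; rewrite E_sym.
have [n le_ab_n] : exists n, a + b <= n by exists (a + b).
elim: n a b A le_ab_n => [|n IH] a b A hab hA.
  have [-> ->] : a = 0 /\ b = 0 by lia.
  by exists set0; [exact: sub0set | left; split; [exact: cards0 | exact: clique0]].
case: a hab hA => [|a] hab hA.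
  by exists set0; [exact: sub0set | left; split; [exact: cards0 | exact: clique0]].
case: b hab hA => [|b] hab hA.
  by exists set0; [exact: sub0set | right; split; [exact: cards0 | exact: clique0]].
have [x xA] : exists x, x \in A.
  by apply/card_gt0P; apply: leq_trans hA; rewrite expn_gt0.
have hcard := card_links xA; rewrite addnS addSn expnS in hA.
have [hN | hNN] : 2 ^ (a + b.+1) <= #|link E A x| \/
                  2 ^ (a.+1 + b) <= #|link NE A x| by rewrite addnS addSn; lia.
- have [B BN [[cB clB] | hB]] := IH a b.+1 _ ltac:(lia) hN.
    have [BA cxB clxB] := clique_link E_sym xA BN clB.
    by exists (x |: B) => //; left; rewrite cxB cB.
  by exists B => //; [exact: subset_trans BN (link_sub _ _ _) | right].
- have [B BN [hB | [cB clB]]] := IH a.+1 b _ ltac:(lia) hNN.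
    by exists B => //; [exact: subset_trans BN (link_sub _ _ _) | left].
  have [BA cxB clxB] := clique_link NE_sym xA BN clB.
  by exists (x |: B) => //; right; rewrite cxB cB.
Qed.

End Ramsey.

Section Dominators.
Variables (T : finType) (D : rel T) (r : nat).
Hypothesis r_gt0 : 0 < r.

Definition dominator_free (A : {set T}) :=
  forall B : {set T}, B \subset A -> #|B| = r ->
  forall x, x \in B -> ~ (forall y, y \in B -> y != x -> D x y).

Lemma dominator_freeS (A A' : {set T}) :
  A' \subset A -> dominator_free A -> dominator_free A'.
Proof. by move=> sA'A freeA B sBA'; apply: freeA; apply: subset_trans sA'A. Qed.

(* Ramsey for the symmetric closure of D oriented along F: an F-minimal vertex
   of a clique would dominate it. *)
Lemma dominator_free_forward (F : T -> nat) K (A : {set T}) :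
  dominator_free A -> 2 ^ (r + K) <= #|A| ->
  exists2 S : {set T}, S \subset A &
    #|S| = K /\ {in S &, forall x y, F x < F y -> ~~ D x y}.
Proof.
pose E := [rel x y | (F x < F y) && D x y || (F y < F x) && D y x].
have E_sym : symmetric E by move=> x y /=; rewrite orbC.
move=> freeA hA; have [B BA [[cB clB] | [cB inB]]] := ramsey E_sym hA.
  have [x0 x0B] : exists x, x \in B by apply/card_gt0P; rewrite cB.
  case: (arg_minnP F x0B) => m mB m_min.
  case: (freeA B BA cB m mB) => y yB ym.
  have my : m != y by rewrite eq_sym.
  have /orP [/andP [_ //] | /andP [ltym _]] := clB m y mB yB my.
  by have := m_min y yB; rewrite leqNgt ltym.
exists B => //; split => // x y xB yB ltxy.
have xy : x != y by apply: contraTneq ltxy => ->; rewrite ltnn.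
by have := inB x y xB yB xy; rewrite /= ltxy; apply: contra => ->.
Qed.

Lemma dominator_free_indep K (A : {set T}) :
  dominator_free A -> 2 ^ (r + 2 ^ (r + K)) <= #|A| ->
  exists2 S : {set T}, S \subset A & #|S| = K /\ clique [rel x y | ~~ D x y] S.
Proof.
move=> freeA hA; pose rk (x : T) : nat := enum_rank x.
have [S1 S1A [cS1 fwd]] := dominator_free_forward rk freeA hA.
have hS1 : 2 ^ (r + K) <= #|S1| by rewrite cS1.
have [S S1S [cS bwd]] :=
  dominator_free_forward (fun x => #|T| - rk x) (dominator_freeS S1A freeA) hS1.
exists S; first exact: subset_trans S1S S1A.
split => // x y xS yS xy /=; have [xS1 yS1] := (subsetP S1S x xS, subsetP S1S y yS).
have : rk x != rk y by apply: contra xy => /eqP /val_inj /enum_rank_inj ->.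
have [rkx rky] : rk x < #|T| /\ rk y < #|T| by split; apply: ltn_ord.
rewrite neq_ltn => /orP [lt | lt]; first exact: fwd.
by apply: bwd => //; lia.
Qed.

End Dominators.

Section Layers.
Variables (T : finType) (e : rel T).

Lemma walk_lenP x y n :
  reflect (exists2 p : seq T, size p = n & path e x p && (last x p == y))
          (walk_len e x y n).
Proof.
apply: (iffP existsP) => [[p hp] | [p hp walk_p]]; first by exists p; rewrite ?size_tuple.
have sz_p : size p == n by rewrite hp.
by exists (Tuple sz_p).
Qed.

Lemma Nbhd0 c v : v \in Nbhd e c 0 -> v = c.
Proof. by rewrite inE => /andP [/walk_lenP [[|] // _ /andP [_ /eqP]]]. Qed.

Lemma Nbhd_parent c i m : m \in Nbhd e c i.+1 -> exists2 u, u \in Nbhd e c i & e u m.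
Proof.
rewrite inE => /andP [/walk_lenP [p sz_p /andP [walk_p last_p]] /forallP short].
case/lastP: p sz_p walk_p last_p => [// | p u].
rewrite size_rcons rcons_path last_rcons => -[sz_p] /andP [walk_p e_um] /eqP u_m; subst m.
exists (last c p) => //; rewrite inE; apply/andP; split.
  by apply/walk_lenP; exists p; rewrite ?walk_p ?eqxx.
apply/forallP => k; apply/negP => /walk_lenP [q sz_q /andP [walk_q /eqP last_q]].
have lt_k : k.+1 < i.+1 by rewrite ltnS.
move/negP: (short (Ordinal lt_k)); apply; apply/walk_lenP; exists (rcons q u).
  by rewrite size_rcons sz_q.
by rewrite rcons_path walk_q last_q e_um last_rcons eqxx.
Qed.

Definition parent c i (m : T) := odflt m [pick u | (u \in Nbhd e c i) && e u m].

Lemma parentP c i m :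
  m \in Nbhd e c i.+1 -> parent c i m \in Nbhd e c i /\ e (parent c i m) m.
Proof.
move=> m_layer; rewrite /parent; case: pickP => [u /andP [] // | none].
by have [u u_layer e_um] := Nbhd_parent m_layer; have := none u; rewrite u_layer e_um.
Qed.

Lemma independentP (M : {set T}) :
  reflect {in M &, forall x y, ~~ e x y} (independent e M).
Proof.
apply: (iffP forall_inP) => [indM x y xM yM | indM x xM].
  by have /forall_inP := indM x xM; apply.
by apply/forall_inP => y yM; apply: indM.
Qed.

Lemma card_enum_inj (B : {set T}) n :
  #|B| = n -> exists f : 'I_n -> T, injective f /\ forall j, f j \in B.
Proof.
move=> cB; exists (fun j => enum_val (cast_ord (esym cB) j)).
split=> [j k /enum_val_inj /(congr1 val) /= jk | j]; [exact: val_inj | exact: enum_valP].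
Qed.

End Layers.

Section LayerStep.
Variables (T : finType) (e : rel T).
Hypothesis e_irr : irreflexive e.
Variables (c : T) (i : nat) (M : {set T}).
Hypotheses (M_layer : M \subset Nbhd e c i.+1) (M_indep : independent e M).

Let p := parent e c i.

Lemma parent_adj m : m \in M -> e (p m) m.
Proof. by move=> /(subsetP M_layer) /parentP []. Qed.

Lemma star_free_parent_dominator_free r :
  ~ has_induced_star e r -> dominator_free [rel x y | e (p x) y] r M.
Proof.
move=> no_star B BM cB x xB dom_x; apply: no_star.
have [f [f_inj fB]] := card_enum_inj cB.
have adj j : e (p x) (f j).
  have [-> | fx] := eqVneq (f j) x; first exact/parent_adj/(subsetP BM).
  exact: dom_x.
exists (p x), f; split=> //; split.
  by move=> j; apply: contraTneq _ (adj j) => ->; rewrite e_irr.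
split=> // j k _; apply: (independentP _ _ M_indep); exact: (subsetP BM).
Qed.

Section Separated.
Variable S : {set T}.
Hypotheses (SM : S \subset M) (S_sep : clique [rel x y | ~~ e (p x) y] S).

Lemma parent_inj : {in S &, injective p}.
Proof.
move=> x y xS yS pxy; apply/eqP; move: (parent_adj (subsetP SM y yS)).
by apply: contraTT => xy; rewrite -pxy; apply: S_sep.
Qed.

Lemma Ksh_of_parent_clique s (B : {set T}) :
  B \subset S -> #|B| = s -> clique [rel x y | e (p x) (p y)] B -> has_induced_Ksh e s.
Proof.
move=> BS cB clB; have [b [b_inj bB]] := card_enum_inj cB.
have bS j : b j \in S by apply: (subsetP BS).
have bM j : b j \in M by apply: (subsetP SM).
have b_neq j k : j != k -> b j != b k by apply: contra => /eqP /b_inj ->.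
exists (fun j => p (b j)), b; split; first by move=> j k /(parent_inj (bS j) (bS k)) /b_inj.
split=> //; split.
  move=> j k; apply: contraTneq _ (parent_adj (bM j)) => ->.
  have [-> | jk] := eqVneq k j; first by rewrite e_irr.
  by apply: (independentP _ _ M_indep).
split; first by move=> j k jk; apply: clB; rewrite ?bB ?b_neq.
split; first by move=> j; apply: parent_adj.
split; first by move=> j k jk; apply: S_sep; rewrite ?bS ?b_neq.
by move=> j k _; apply: (independentP _ _ M_indep).
Qed.

Lemma parents_of_anticlique (B : {set T}) :
  B \subset S -> clique [rel x y | ~~ e (p x) (p y)] B ->
  [/\ p @: B \subset Nbhd e c i, independent e (p @: B) & #|p @: B| = #|B|].
Proof.
move=> BS clB; have sBM := subset_trans BS SM.
split.
- apply/subsetP => _ /imsetP [x xB ->].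
  by case: (parentP (subsetP (subset_trans sBM M_layer) x xB)).
- apply/independentP => _ _ /imsetP [x xB ->] /imsetP [y yB ->].
  by have [-> | xy] := eqVneq x y; [rewrite e_irr | apply: clB].
- by apply: card_in_imset => x y xB yB; apply: parent_inj; apply: (subsetP BS).
Qed.

End Separated.
End LayerStep.

Fixpoint alpha_bound (r s i : nat) : nat :=
  if i is i'.+1 then 2 ^ (r + 2 ^ (r + 2 ^ (s + alpha_bound r s i'))) else 2.

Lemma indep_layer_card_lt (T : finType) (e : rel T) r s c i (M : {set T}) :
  simple_graph e -> 0 < r -> star_Ksh_free e r s ->
  M \subset Nbhd e c i -> independent e M -> #|M| < alpha_bound r s i.
Proof.
move=> [e_sym e_irr] r_gt0 [no_star no_Ksh].
elim: i M => [|i IH] M M_layer M_indep.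
  apply: (@leq_ltn_trans #|[set c]|); last by rewrite cards1.
  apply: subset_leq_card.
  by apply/subsetP => v /(subsetP M_layer) /Nbhd0 ->; rewrite inE.
rewrite ltnNge; apply/negP => large_M; pose p := parent e c i.
have [S SM [cS S_sep]] := dominator_free_indep r_gt0
  (star_free_parent_dominator_free e_irr M_layer M_indep no_star) large_M.
have p_sym : symmetric [rel x y | e (p x) (p y)] by move=> x y /=; rewrite e_sym.
have large_S : 2 ^ (s + alpha_bound r s i) <= #|S| by rewrite cS.
have [B BS [[cB clB] | [cB clB]]] := ramsey p_sym large_S.
  exact/no_Ksh/(Ksh_of_parent_clique e_irr M_layer M_indep SM S_sep BS cB clB).
have [P_layer P_indep cP] := parents_of_anticlique e_irr M_layer SM S_sep BS clB.
by have := IH _ P_layer P_indep; rewrite cP cB ltnn.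
Qed.

Theorem corollary1 (r s i : nat) (hr : 0 < r) (hs : 0 < s) (hi : 0 < i) :
  exists A : nat,
    forall (T : finType) (e : rel T),
      simple_graph e -> connected_graph e -> star_Ksh_free e r s ->
      forall c : T, alpha0 e c i < A.
Proof.
exists (alpha_bound r s i) => T e simple_e _ free_e c.
have bound_gt0 : 0 < alpha_bound r s i by case: i {hi} => //= i; rewrite expn_gt0.
rewrite -(prednK bound_gt0) ltnS; apply/bigmax_leqP => M /andP [M_layer M_indep].
by rewrite -ltnS prednK //; exact: indep_layer_card_lt simple_e hr free_e M_layer M_indep.
Qed.
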